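(* Let $\theta>0$, $L\ge1$, $K(x,y)=\exp(-\theta|x-y|)$ on $[0,1]$, and $\mathbf V=\operatorname{span}\{K(\cdot,j2^{-L}):j=0,1,\dots,2^L\}$. Then the $2^L+1$ functions $\psi_{01},\psi_{02}$ and $\psi_{lm}$ ($l=1,\dots,L$, $m\in\{1,3,\dots,2^l-1\}$) form an orthonormal basis of $\mathbf V$ with respect to the inner product of the reproducing kernel Hilbert space $\mathcal N_K[0,1]$ of $K$.
   Context: $\mathcal N_K[0,1]$ is the RKHS of $K$ on $[0,1]$, i.e. the completion of finite combinations $\sum_j\beta_jK(\cdot,x_j)$ under $\langle \sum_j\beta_jK(\cdot,x_j),\sum_k\beta'_kK(\cdot,x'_k)\rangle=\sum_{j,k}\beta_j\beta'_kK(x_j,x'_k)$. The functions are $\psi_{01}(x)=\dfrac{e^{-\theta x}+e^{-\theta(1-x)}}{\sqrt{2(1+e^{-\theta})}}$, $\psi_{02}(x)=\dfrac{e^{-\theta x}-e^{-\theta(1-x)}}{\sqrt{2(1-e^{-\theta})}}$, and for $l\ge1$, odd $m\in\{1,\dots,2^l-1\}$: $\psi_{lm}(x)=\sqrt{\tfrac{2}{\sinh(2^{1-l}\theta)}}\sinh(\theta(x-(m-1)2^{-l}))$ on $[(m-1)2^{-l},m2^{-l}]$, $\psi_{lm}(x)=\sqrt{\tfrac{2}{\sinh(2^{1-l}\theta)}}\sinh(\theta((m+1)2^{-l}-x))$ on $[m2^{-l},(m+1)2^{-l}]$, and $0$ elsewhere on $[0,1]$. *)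

From Stdlib Require Import Reals Lra Lia List.
Open Scope R_scope.

Definition Kexp (theta x y : R) : R := exp (- theta * Rabs (x - y)).

Definition node (L j : nat) : R := INR j / 2 ^ L.

(* Elements of V = span{K(.,j2^-L) : j = 0..2^L}, given by coefficients c. *)
Definition comb (theta : R) (L : nat) (c : nat -> R) (x : R) : R :=
  sum_f_R0 (fun j => c j * Kexp theta x (node L j)) (2 ^ L).

(* RKHS inner product of two such finite combinations:
   <sum_j c_j K(.,x_j), sum_k c'_k K(.,x_k)> = sum_{j,k} c_j c'_k K(x_j,x_k). *)
Definition rkhs_ip (theta : R) (L : nat) (c c' : nat -> R) : R :=
  sum_f_R0 (fun j => sum_f_R0 (fun k =>
     c j * c' k * Kexp theta (node L j) (node L k)) (2 ^ L)) (2 ^ L).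

Definition psi01 (theta x : R) : R :=
  (exp (- theta * x) + exp (- theta * (1 - x))) / sqrt (2 * (1 + exp (- theta))).
Definition psi02 (theta x : R) : R :=
  (exp (- theta * x) - exp (- theta * (1 - x))) / sqrt (2 * (1 - exp (- theta))).

Definition psi_lm (theta : R) (l m : nat) (x : R) : R :=
  let a := (INR m - 1) / 2 ^ l in
  let b := INR m / 2 ^ l in
  let c := (INR m + 1) / 2 ^ l in
  let s := sqrt (2 / sinh (2 / 2 ^ l * theta)) in
  if Rle_dec a x then
    if Rle_dec x b then s * sinh (theta * (x - a))
    else if Rle_dec x c then s * sinh (theta * (c - x)) else 0
  else 0.

Definition psi (theta : R) (a : nat * nat) (x : R) : R :=
  match a with
  | (0%nat, 1%nat) => psi01 theta x
  | (0%nat, 2%nat) => psi02 theta x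
  | (0%nat, _) => 0
  | (S l', m) => psi_lm theta (S l') m x
  end.

Definition idx (L : nat) : list (nat * nat) :=
  (0%nat, 1%nat) :: (0%nat, 2%nat) ::
  flat_map (fun l => map (fun k => (l, 2 * k + 1)%nat) (seq 0 (2 ^ (l - 1))))
           (seq 1 L).

Definition delta (a b : nat * nat) : R :=
  if (Nat.eqb (fst a) (fst b) && Nat.eqb (snd a) (snd b))%bool then 1 else 0.

Definition sum_list (l : list (nat * nat)) (f : nat * nat -> R) : R :=
  fold_right (fun a s => f a + s) 0 l.

(* Every psi is a combination of at most three grid kernels K(., j 2^-L):
   psi01, psi02 are (K(., 0) +- K(., 1)) / norm, and a hat of level l with
   h = 2^-l supported on [a, a + 2h] equals
   s (cosh (theta h) K(., a + h) - K(., a) / 2 - K(., a + 2h) / 2),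
   since on each piece both sides are combinations of e^(theta x), e^(-theta x).
   By the reproducing property <sum_j c_j K(., x_j), f> = sum_j c_j f(x_j),
   so for level a <= level b the product <psi_a, psi_b> only involves values of
   psi_b at the three nodes of psi_a.  A hat vanishes at every point of its own
   grid but its peak and at every point of a coarser grid, which gives
   orthogonality; sinh (2y) = 2 sinh y cosh y gives the normalisation.
   Spanning is by induction on L: kernels at even nodes come from level L - 1,
   and the kernel at an odd node is recovered from its hat and its two
   neighbours. *)

From Stdlib Require Import Reals Lra Lia List.
Open Scope R_scope.

Definition level (l : nat) : list (nat * nat) :=
  map (fun k => (l, 2 * k + 1)%nat) (seq 0 (2 ^ (l - 1))).

Lemma idx_0 : idx 0 = (0, 1)%nat :: (0, 2)%nat :: nil.
Proof. reflexivity. Qed.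

Lemma idx_S L : idx (S L) = idx L ++ level (S L).
Proof.
  unfold idx; rewrite seq_S, flat_map_app; cbn [flat_map].
  rewrite app_nil_r; replace (1 + L)%nat with (S L) by lia; reflexivity.
Qed.

Lemma in_level l a :
  In a (level l) <-> exists k, (k < 2 ^ (l - 1))%nat /\ a = (l, 2 * k + 1)%nat.
Proof.
  unfold level; rewrite in_map_iff; split.
  - intros [k [<- Hk]]; apply in_seq in Hk; exists k; split; [lia | easy].
  - intros [k [Hk ->]]; exists k; split; [easy | apply in_seq; lia].
Qed.

Lemma in_idx L a :
  In a (idx L) <-> a = (0, 1)%nat \/ a = (0, 2)%nat \/
    exists l k, (1 <= l <= L)%nat /\ (k < 2 ^ (l - 1))%nat /\ a = (l, 2 * k + 1)%nat.
Proof.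
  unfold idx; cbn [In]; rewrite in_flat_map.
  split; intros [H | [H | H]]; auto; right; right.
  - destruct H as [l [Hl Ha]]; apply in_seq in Hl; apply in_level in Ha.
    destruct Ha as [k [Hk ->]]; exists l, k; repeat split; auto; lia.
  - destruct H as [l [k [Hl [Hk ->]]]]; exists l; split.
    + apply in_seq; lia.
    + apply in_level; eauto.
Qed.

Lemma NoDup_idx L : NoDup (idx L).
Proof.
  induction L as [|L IH].
  - rewrite idx_0; repeat constructor; simpl; intuition discriminate.
  - rewrite idx_S; apply NoDup_app; auto.
    + unfold level; apply NoDup_map_NoDup_ForallPairs; [|apply seq_NoDup].
      intros k k' _ _ E; injection E; lia.
    + intros a Ha Ha'; apply in_level in Ha'; destruct Ha' as [k [_ ->]].
      apply in_idx in Ha; destruct Ha as [E | [E | [l [k' [Hl [_ E]]]]]];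
        injection E; lia.
Qed.

Lemma length_idx L : length (idx L) = (2 ^ L + 1)%nat.
Proof.
  induction L as [|L IH]; [reflexivity|].
  rewrite idx_S, length_app, IH; unfold level; rewrite length_map, length_seq.
  cbn [Nat.pow]; replace (S L - 1)%nat with L by lia; lia.
Qed.

Lemma sum_list_app l1 l2 f : sum_list (l1 ++ l2) f = sum_list l1 f + sum_list l2 f.
Proof. induction l1 as [|a l1 IH]; simpl; [ring | rewrite IH; ring]. Qed.

Lemma sum_list_ext l f g : (forall a, In a l -> f a = g a) -> sum_list l f = sum_list l g.
Proof.
  induction l as [|a l IH]; simpl; intros H; [reflexivity|].
  rewrite H, IH; auto.
Qed.

Lemma sum_list_eq0 l f : (forall a, In a l -> f a = 0) -> sum_list l f = 0.
Proof.
  induction l as [|a l IH]; simpl; intros H; [reflexivity|].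
  rewrite H, IH by auto; ring.
Qed.

Lemma sum_list_lin l (al be : R) d d' (p : nat * nat -> R) :
  sum_list l (fun a => (al * d a + be * d' a) * p a) =
  al * sum_list l (fun a => d a * p a) + be * sum_list l (fun a => d' a * p a).
Proof. induction l as [|a l IH]; simpl; [ring | rewrite IH; ring]. Qed.

Lemma delta_refl a : delta a a = 1.
Proof. unfold delta; rewrite !Nat.eqb_refl; reflexivity. Qed.

Lemma delta_neq a b : a <> b -> delta a b = 0.
Proof.
  destruct a as [a1 a2], b as [b1 b2]; unfold delta; simpl; intros H.
  destruct (Nat.eqb_spec a1 b1), (Nat.eqb_spec a2 b2); subst; simpl; congruence.
Qed.

Lemma delta_sym a b : delta a b = delta b a.
Proof. unfold delta; rewrite (Nat.eqb_sym (fst a)), (Nat.eqb_sym (snd a)); reflexivity. Qed.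

Lemma sum_list_delta l p b :
  NoDup l -> In b l -> sum_list l (fun a => delta a b * p a) = p b.
Proof.
  induction l as [|a l IH]; simpl; intros Hl Hb; [contradiction|].
  inversion Hl as [|? ? Ha Hl']; subst.
  destruct Hb as [-> | Hb].
  - rewrite delta_refl, sum_list_eq0; [ring|].
    intros a' Ha'; rewrite delta_neq by congruence; ring.
  - rewrite delta_neq, IH by (auto; congruence); ring.
Qed.

Definition point_mass (k : nat) (v : R) (j : nat) : R := if Nat.eqb j k then v else 0.

Lemma sum_point_mass k v g n :
  sum_f_R0 (fun j => point_mass k v j * g j) n = if Nat.leb k n then v * g k else 0.
Proof.
  unfold point_mass; induction n as [|n IH]; cbn [sum_f_R0].
  - destruct k; simpl; ring.
  - rewrite IH; destruct (Nat.eqb_spec (S n) k), (Nat.leb_spec k n), (Nat.leb_spec k (S n));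
      subst; try lia; ring.
Qed.

Definition three_point k1 v1 k2 v2 k3 v3 (j : nat) : R :=
  point_mass k1 v1 j + point_mass k2 v2 j + point_mass k3 v3 j.

Lemma sum_three_point k1 v1 k2 v2 k3 v3 g n :
  (k1 <= n)%nat -> (k2 <= n)%nat -> (k3 <= n)%nat ->
  sum_f_R0 (fun j => three_point k1 v1 k2 v2 k3 v3 j * g j) n =
  v1 * g k1 + v2 * g k2 + v3 * g k3.
Proof.
  intros H1 H2 H3; unfold three_point.
  rewrite (sum_eq _ (fun j => point_mass k1 v1 j * g j + point_mass k2 v2 j * g j
                              + point_mass k3 v3 j * g j)) by (intros; ring).
  rewrite !sum_plus, !sum_point_mass.
  apply Nat.leb_le in H1, H2, H3; rewrite H1, H2, H3; reflexivity.
Qed.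

Lemma comb_three_point th L k1 v1 k2 v2 k3 v3 x :
  (k1 <= 2 ^ L)%nat -> (k2 <= 2 ^ L)%nat -> (k3 <= 2 ^ L)%nat ->
  comb th L (three_point k1 v1 k2 v2 k3 v3) x =
  v1 * Kexp th x (node L k1) + v2 * Kexp th x (node L k2) + v3 * Kexp th x (node L k3).
Proof. apply sum_three_point. Qed.

Lemma rkhs_ip_comb th L c c' :
  rkhs_ip th L c c' = sum_f_R0 (fun j => c j * comb th L c' (node L j)) (2 ^ L).
Proof.
  unfold rkhs_ip, comb; apply sum_eq; intros j _.
  rewrite scal_sum; apply sum_eq; intros; ring.
Qed.

Lemma sum_f_R0_swap (f : nat -> nat -> R) n m :
  sum_f_R0 (fun j => sum_f_R0 (fun k => f j k) n) m =
  sum_f_R0 (fun k => sum_f_R0 (fun j => f j k) m) n.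
Proof. induction m as [|m IH]; simpl; [reflexivity | rewrite IH, <- sum_plus; reflexivity]. Qed.

Lemma rkhs_ip_sym th L c c' : rkhs_ip th L c c' = rkhs_ip th L c' c.
Proof.
  unfold rkhs_ip; rewrite sum_f_R0_swap; apply sum_eq; intros; apply sum_eq; intros.
  unfold Kexp; rewrite Rabs_minus_sym; ring.
Qed.

Lemma pow2_pos n : 0 < 2 ^ n.
Proof. apply pow_lt; lra. Qed.

Lemma inv_pow2_pos n : 0 < / 2 ^ n.
Proof. apply Rinv_0_lt_compat, pow2_pos. Qed.

Lemma sinh_pos y : 0 < y -> 0 < sinh y.
Proof. intros Hy; rewrite <- sinh_0; apply sinh_lt, Hy. Qed.

Lemma cosh_pos y : 0 < cosh y.
Proof. unfold cosh; pose proof (exp_pos y); pose proof (exp_pos (- y)); lra. Qed.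

Lemma sinh_double y : sinh (2 * y) = 2 * sinh y * cosh y.
Proof.
  unfold sinh, cosh; replace (2 * y) with (y + y) by ring.
  replace (- (y + y)) with (- y + - y) by ring.
  rewrite !exp_plus, !exp_Ropp; pose proof (exp_pos y); field; lra.
Qed.

Lemma exp_neg_lt1 th : 0 < th -> exp (- th) < 1.
Proof. intros; rewrite <- exp_0; apply exp_increasing; lra. Qed.

Lemma node_dyadic L l k : (l <= L)%nat -> node L (k * 2 ^ (L - l)) = INR k / 2 ^ l.
Proof.
  intros H; unfold node; rewrite mult_INR, pow_INR; change (INR 2) with 2.
  replace (2 ^ L) with (2 ^ (L - l) * 2 ^ l) by (rewrite <- pow_add; f_equal; lia).
  pose proof (pow2_pos (L - l)); pose proof (pow2_pos l); field; lra.
Qed.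

Lemma dyadic_refine j l l' :
  (l <= l')%nat -> INR j / 2 ^ l = INR (j * 2 ^ (l' - l)) / 2 ^ l'.
Proof. intros H; rewrite <- (node_dyadic l' l j H); reflexivity. Qed.

Lemma node_0 L : node L 0 = 0.
Proof. unfold node; simpl; pose proof (pow2_pos L); field; lra. Qed.

Lemma node_last L : node L (2 ^ L) = 1.
Proof.
  unfold node; rewrite pow_INR; change (INR 2) with 2; pose proof (pow2_pos L); field; lra.
Qed.

Lemma node_unit L k : (k <= 2 ^ L)%nat -> 0 <= node L k <= 1.
Proof.
  intros H; apply le_INR in H; rewrite pow_INR in H; change (INR 2) with 2 in H.
  unfold node, Rdiv; pose proof (inv_pow2_pos L); split.
  - apply Rmult_le_pos; [apply pos_INR | lra].
  - rewrite <- (Rinv_r (2 ^ L)) by apply Rgt_not_eq, pow2_pos.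
    apply Rmult_le_compat_r; lra.
Qed.

Section Basis.

Variable theta : R.
Hypothesis theta_pos : 0 < theta.

Lemma Kexp_le x y : x <= y -> Kexp theta x y = exp (theta * x) / exp (theta * y).
Proof.
  intros H; unfold Kexp; rewrite Rabs_left1 by lra.
  replace (- theta * - (x - y)) with (theta * x + - (theta * y)) by ring.
  rewrite exp_plus, exp_Ropp; reflexivity.
Qed.

Lemma Kexp_ge x y : y <= x -> Kexp theta x y = exp (theta * y) / exp (theta * x).
Proof.
  intros H; unfold Kexp; rewrite Rabs_right by lra.
  replace (- theta * (x - y)) with (theta * y + - (theta * x)) by ring.
  rewrite exp_plus, exp_Ropp; reflexivity.
Qed.

Lemma sinh_sub u v :
  sinh (theta * (u - v)) =
  (exp (theta * u) / exp (theta * v) - exp (theta * v) / exp (theta * u)) / 2.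
Proof.
  unfold sinh; replace (theta * (u - v)) with (theta * u + - (theta * v)) by ring.
  replace (- (theta * u + - (theta * v))) with (theta * v + - (theta * u)) by ring.
  rewrite !exp_plus, !exp_Ropp; reflexivity.
Qed.

Definition hat (s a h x : R) : R :=
  if Rle_dec a x then
    if Rle_dec x (a + h) then s * sinh (theta * (x - a))
    else if Rle_dec x (a + h + h) then s * sinh (theta * (a + h + h - x)) else 0
  else 0.

Lemma hat_kernel s a h x : 0 < h ->
  hat s a h x = - s / 2 * Kexp theta x a + s * cosh (theta * h) * Kexp theta x (a + h)
                - s / 2 * Kexp theta x (a + h + h).
Proof.
  intros Hh; unfold hat, cosh.
  assert (E1 : exp (theta * (a + h)) = exp (theta * a) * exp (theta * h))
    by (rewrite <- exp_plus; f_equal; ring).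
  assert (E2 : exp (theta * (a + h + h)) = exp (theta * a) * exp (theta * h) * exp (theta * h))
    by (rewrite <- !exp_plus; f_equal; ring).
  rewrite exp_Ropp.
  pose proof (exp_pos (theta * x)); pose proof (exp_pos (theta * a)).
  pose proof (exp_pos (theta * h)).
  destruct (Rle_dec a x); [destruct (Rle_dec x (a + h)); [|destruct (Rle_dec x (a + h + h))]|].
  - rewrite sinh_sub, (Kexp_ge x a), (Kexp_le x (a + h)), (Kexp_le x (a + h + h)) by lra.
    rewrite E1, E2; field; lra.
  - rewrite sinh_sub, (Kexp_ge x a), (Kexp_ge x (a + h)), (Kexp_le x (a + h + h)) by lra.
    rewrite E1, E2; field; lra.
  - rewrite (Kexp_ge x a), (Kexp_ge x (a + h)), (Kexp_ge x (a + h + h)) by lra.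
    rewrite E1, E2; field; lra.
  - rewrite (Kexp_le x a), (Kexp_le x (a + h)), (Kexp_le x (a + h + h)) by lra.
    rewrite E1, E2; field; lra.
Qed.

Lemma hat_outside s a h x : (x <= a \/ a + h + h <= x) -> hat s a h x = 0.
Proof.
  intros Hx; unfold hat.
  destruct (Rle_dec a x); [destruct (Rle_dec x (a + h)); [|destruct (Rle_dec x (a + h + h))]|];
    auto.
  - replace (x - a) with 0 by lra; rewrite Rmult_0_r, sinh_0; ring.
  - replace (a + h + h - x) with 0 by lra; rewrite Rmult_0_r, sinh_0; ring.
Qed.

Lemma hat_peak s a h : 0 < h -> hat s a h (a + h) = s * sinh (theta * h).
Proof.
  intros Hh; unfold hat.
  destruct (Rle_dec a (a + h)); [|lra]; destruct (Rle_dec (a + h) (a + h)); [|lra].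
  replace (a + h - a) with h by ring; reflexivity.
Qed.

Definition psi_scale (l : nat) : R := sqrt (2 / sinh (2 / 2 ^ l * theta)).

Lemma psi_lm_hat l m x :
  psi_lm theta l m x = hat (psi_scale l) ((INR m - 1) / 2 ^ l) (/ 2 ^ l) x.
Proof.
  unfold psi_lm, hat, psi_scale; cbv zeta; pose proof (pow2_pos l).
  replace (INR m / 2 ^ l) with ((INR m - 1) / 2 ^ l + / 2 ^ l) by (field; lra).
  replace ((INR m + 1) / 2 ^ l) with ((INR m - 1) / 2 ^ l + / 2 ^ l + / 2 ^ l)
    by (field; lra).
  reflexivity.
Qed.

Lemma psi_lm_kernel l m x :
  psi_lm theta l m x =
  - psi_scale l / 2 * Kexp theta x ((INR m - 1) / 2 ^ l)
  + psi_scale l * cosh (theta / 2 ^ l) * Kexp theta x (INR m / 2 ^ l)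
  - psi_scale l / 2 * Kexp theta x ((INR m + 1) / 2 ^ l).
Proof.
  rewrite psi_lm_hat, hat_kernel by apply inv_pow2_pos; pose proof (pow2_pos l).
  replace ((INR m - 1) / 2 ^ l + / 2 ^ l) with (INR m / 2 ^ l) by (field; lra).
  replace (INR m / 2 ^ l + / 2 ^ l) with ((INR m + 1) / 2 ^ l) by (field; lra).
  reflexivity.
Qed.

Lemma psi_lm_grid_off l m k : k <> m -> psi_lm theta l m (INR k / 2 ^ l) = 0.
Proof.
  intros H; rewrite psi_lm_hat; apply hat_outside; pose proof (pow2_pos l).
  destruct (Nat.lt_ge_cases k m) as [Hk | Hk].
  - left; assert (INR (k + 1) <= INR m) by (apply le_INR; lia); rewrite plus_INR in *.
    apply Rmult_le_compat_r; [apply Rlt_le, inv_pow2_pos | simpl in *; lra].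
  - right; replace ((INR m - 1) / 2 ^ l + / 2 ^ l + / 2 ^ l) with ((INR m + 1) / 2 ^ l)
      by (field; lra).
    assert (INR (m + 1) <= INR k) by (apply le_INR; lia); rewrite plus_INR in *.
    apply Rmult_le_compat_r; [apply Rlt_le, inv_pow2_pos | simpl in *; lra].
Qed.

Lemma psi_lm_grid_peak l m :
  psi_lm theta l m (INR m / 2 ^ l) = psi_scale l * sinh (theta / 2 ^ l).
Proof.
  rewrite psi_lm_hat; pose proof (pow2_pos l).
  replace (INR m / 2 ^ l) with ((INR m - 1) / 2 ^ l + / 2 ^ l) by (field; lra).
  apply hat_peak, inv_pow2_pos.
Qed.

(* Refined to level l', a coarser grid point has an even numerator. *)
Lemma psi_lm_coarse_grid l l' k j :
  (l < l')%nat -> psi_lm theta l' (2 * k + 1) (INR j / 2 ^ l) = 0.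
Proof.
  intros H; rewrite (dyadic_refine j l l') by lia; apply psi_lm_grid_off.
  replace (l' - l)%nat with (S (l' - l - 1)) by lia; rewrite Nat.pow_succ_r'; lia.
Qed.

Lemma psi_scale_sq l :
  psi_scale l * psi_scale l * (sinh (theta / 2 ^ l) * cosh (theta / 2 ^ l)) = 1.
Proof.
  pose proof (pow2_pos l).
  assert (Hs : 0 < sinh (theta / 2 ^ l))
    by (apply sinh_pos, Rmult_lt_0_compat; [lra | apply inv_pow2_pos]).
  pose proof (cosh_pos (theta / 2 ^ l)).
  unfold psi_scale; replace (2 / 2 ^ l * theta) with (2 * (theta / 2 ^ l)) by (field; lra).
  rewrite sinh_double, sqrt_sqrt; [field; lra|].
  apply Rlt_le, Rdiv_lt_0_compat; [lra | apply Rmult_lt_0_compat; lra].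
Qed.

Lemma psi_scale_pos l : 0 < psi_scale l.
Proof.
  apply sqrt_lt_R0, Rdiv_lt_0_compat; [lra|].
  apply sinh_pos, Rmult_lt_0_compat; [apply Rdiv_lt_0_compat; [lra | apply pow2_pos] | lra].
Qed.

Definition norm01 : R := sqrt (2 * (1 + exp (- theta))).
Definition norm02 : R := sqrt (2 * (1 - exp (- theta))).

Lemma norm01_pos : 0 < norm01.
Proof. apply sqrt_lt_R0; pose proof (exp_pos (- theta)); lra. Qed.

Lemma norm02_pos : 0 < norm02.
Proof. apply sqrt_lt_R0; pose proof (exp_neg_lt1 theta theta_pos); lra. Qed.

Lemma norm01_sq : norm01 * norm01 = 2 * (1 + exp (- theta)).
Proof. apply sqrt_sqrt; pose proof (exp_pos (- theta)); lra. Qed.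

Lemma norm02_sq : norm02 * norm02 = 2 * (1 - exp (- theta)).
Proof. apply sqrt_sqrt; pose proof (exp_neg_lt1 theta theta_pos); lra. Qed.

Lemma psi01_endpoints :
  psi01 theta 0 = (1 + exp (- theta)) / norm01 /\ psi01 theta 1 = (1 + exp (- theta)) / norm01.
Proof.
  unfold psi01; fold norm01; rewrite Rminus_0_r, Rminus_diag, !Rmult_0_r, !Rmult_1_r, exp_0.
  split; [reflexivity | f_equal; ring].
Qed.

Lemma psi02_endpoints :
  psi02 theta 0 = (1 - exp (- theta)) / norm02 /\ psi02 theta 1 = - (1 - exp (- theta)) / norm02.
Proof.
  unfold psi02; fold norm02; rewrite Rminus_0_r, Rminus_diag, !Rmult_0_r, !Rmult_1_r, exp_0.
  split; [reflexivity | f_equal; ring].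
Qed.

Lemma psi_level l m x : (1 <= l)%nat -> psi theta (l, m) x = psi_lm theta l m x.
Proof. destruct l; [lia | reflexivity]. Qed.

Lemma psi_level_endpoints l k :
  (1 <= l)%nat -> psi theta (l, 2 * k + 1)%nat 0 = 0 /\ psi theta (l, 2 * k + 1)%nat 1 = 0.
Proof.
  intros Hl; rewrite !psi_level by exact Hl; split.
  - transitivity (psi_lm theta l (2 * k + 1) (INR 0 / 2 ^ 0)); [f_equal; simpl; field|].
    apply psi_lm_coarse_grid; lia.
  - transitivity (psi_lm theta l (2 * k + 1) (INR 1 / 2 ^ 0)); [f_equal; simpl; field|].
    apply psi_lm_coarse_grid; lia.
Qed.

(* Coefficients of psi_a on the grid kernels K(., j 2^-L), read off from
   [psi_lm_kernel] and the definitions of psi01, psi02. *)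
Definition coef (L : nat) (a : nat * nat) : nat -> R :=
  match a with
  | (0%nat, 1%nat) => three_point 0 (/ norm01) (2 ^ L) (/ norm01) 0 0
  | (0%nat, 2%nat) => three_point 0 (/ norm02) (2 ^ L) (- / norm02) 0 0
  | (0%nat, _) => fun _ => 0
  | (S l', m) =>
      three_point ((m - 1) * 2 ^ (L - S l'))%nat (- psi_scale (S l') / 2)
                  (m * 2 ^ (L - S l'))%nat
                  (psi_scale (S l') * cosh (theta / 2 ^ S l'))
                  ((m + 1) * 2 ^ (L - S l'))%nat (- psi_scale (S l') / 2)
  end.

Lemma coef_level L l m : (1 <= l)%nat ->
  coef L (l, m) =
  three_point ((m - 1) * 2 ^ (L - l))%nat (- psi_scale l / 2)
              (m * 2 ^ (L - l))%nat (psi_scale l * cosh (theta / 2 ^ l))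
              ((m + 1) * 2 ^ (L - l))%nat (- psi_scale l / 2).
Proof. destruct l; [lia | reflexivity]. Qed.

Lemma level_nodes_bound L l k : (1 <= l <= L)%nat -> (k < 2 ^ (l - 1))%nat ->
  ((2 * k + 1 - 1) * 2 ^ (L - l) <= 2 ^ L)%nat /\ ((2 * k + 1) * 2 ^ (L - l) <= 2 ^ L)%nat /\
  ((2 * k + 1 + 1) * 2 ^ (L - l) <= 2 ^ L)%nat.
Proof.
  intros Hl Hk.
  replace (2 ^ L)%nat with (2 * 2 ^ (l - 1) * 2 ^ (L - l))%nat
    by (rewrite <- Nat.pow_succ_r', <- Nat.pow_add_r; f_equal; lia).
  nia.
Qed.

Lemma psi_comb L a x :
  In a (idx L) -> 0 <= x <= 1 -> psi theta a x = comb theta L (coef L a) x.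
Proof.
  intros Ha Hx.
  apply in_idx in Ha; destruct Ha as [-> | [-> | [l [k [Hl [Hk ->]]]]]].
  - cbn [coef psi]; rewrite comb_three_point, node_0, node_last by lia.
    unfold psi01, Kexp; fold norm01; pose proof norm01_pos.
    rewrite Rabs_right, (Rabs_left1 (x - 1)), Rminus_0_r by lra.
    replace (- theta * - (x - 1)) with (- theta * (1 - x)) by ring; field; lra.
  - cbn [coef psi]; rewrite comb_three_point, node_0, node_last by lia.
    unfold psi02, Kexp; fold norm02; pose proof norm02_pos.
    rewrite Rabs_right, (Rabs_left1 (x - 1)), Rminus_0_r by lra.
    replace (- theta * - (x - 1)) with (- theta * (1 - x)) by ring; field; lra.
  - destruct (level_nodes_bound L l k Hl Hk) as [B1 [B2 B3]].
    rewrite coef_level, psi_level, comb_three_point, !node_dyadic, psi_lm_kernel by lia.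
    rewrite minus_INR, !plus_INR by lia; change (INR 1) with 1; field.
Qed.

Lemma rkhs_ip_coef L b k1 v1 k2 v2 k3 v3 :
  In b (idx L) -> (k1 <= 2 ^ L)%nat -> (k2 <= 2 ^ L)%nat -> (k3 <= 2 ^ L)%nat ->
  rkhs_ip theta L (three_point k1 v1 k2 v2 k3 v3) (coef L b) =
  v1 * psi theta b (node L k1) + v2 * psi theta b (node L k2) + v3 * psi theta b (node L k3).
Proof.
  intros Hb H1 H2 H3; rewrite rkhs_ip_comb, sum_three_point by assumption.
  rewrite !(psi_comb L b) by (auto; apply node_unit; assumption); reflexivity.
Qed.

Lemma coef01_orthonormal L b :
  In b (idx L) -> rkhs_ip theta L (coef L (0, 1)%nat) (coef L b) = delta (0, 1)%nat b.
Proof.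
  intros Hb; cbn [coef].
  rewrite rkhs_ip_coef, node_0, node_last by (auto; lia).
  pose proof norm01_pos; pose proof norm02_pos.
  apply in_idx in Hb; destruct Hb as [-> | [-> | [l [k [Hl [Hk ->]]]]]].
  - cbn [psi]; destruct psi01_endpoints as [-> ->]; rewrite delta_refl.
    transitivity (2 * (1 + exp (- theta)) / (norm01 * norm01)); [field; lra|].
    rewrite norm01_sq; field; pose proof (exp_pos (- theta)); lra.
  - cbn [psi]; destruct psi02_endpoints as [-> ->]; rewrite delta_neq by discriminate; field; lra.
  - destruct (psi_level_endpoints l k) as [-> ->]; [lia|].
    rewrite delta_neq by (intro E; injection E; lia); ring.
Qed.

Lemma coef02_orthonormal L b :
  In b (idx L) -> rkhs_ip theta L (coef L (0, 2)%nat) (coef L b) = delta (0, 2)%nat b.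
Proof.
  intros Hb; cbn [coef].
  rewrite rkhs_ip_coef, node_0, node_last by (auto; lia).
  pose proof norm01_pos; pose proof norm02_pos.
  apply in_idx in Hb; destruct Hb as [-> | [-> | [l [k [Hl [Hk ->]]]]]].
  - cbn [psi]; destruct psi01_endpoints as [-> ->]; rewrite delta_neq by discriminate; field; lra.
  - cbn [psi]; destruct psi02_endpoints as [-> ->]; rewrite delta_refl.
    transitivity (2 * (1 - exp (- theta)) / (norm02 * norm02)); [field; lra|].
    rewrite norm02_sq; field; pose proof (exp_neg_lt1 theta theta_pos); lra.
  - destruct (psi_level_endpoints l k) as [-> ->]; [lia|].
    rewrite delta_neq by (intro E; injection E; lia); ring.
Qed.

Lemma coef_level_orthonormal L l k b :
  (1 <= l <= L)%nat -> (k < 2 ^ (l - 1))%nat -> In b (idx L) -> (l <= fst b)%nat ->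
  rkhs_ip theta L (coef L (l, 2 * k + 1)%nat) (coef L b) = delta (l, 2 * k + 1)%nat b.
Proof.
  intros Hl Hk Hb Hlb; destruct (level_nodes_bound L l k Hl Hk) as [B1 [B2 B3]].
  rewrite coef_level, rkhs_ip_coef, !node_dyadic by (auto; lia).
  apply in_idx in Hb; destruct Hb as [-> | [-> | [l' [k' [Hl' [_ ->]]]]]]; cbn [fst] in Hlb;
    [lia | lia | rewrite !psi_level by lia].
  destruct (Nat.eq_dec l l') as [<- | Hne]; [destruct (Nat.eq_dec k k') as [<- | Hkk]|].
  - rewrite delta_refl, psi_lm_grid_peak.
    rewrite (psi_lm_grid_off l _ (2 * k + 1 - 1)), (psi_lm_grid_off l _ (2 * k + 1 + 1))
      by lia.
    rewrite <- (psi_scale_sq l); field.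
  - rewrite delta_neq, !psi_lm_grid_off by (try (intro E; injection E); lia); field.
  - rewrite delta_neq, !psi_lm_coarse_grid by (try (intro E; injection E); lia); field.
Qed.

Lemma coef_orthonormal L a b :
  In a (idx L) -> In b (idx L) -> rkhs_ip theta L (coef L a) (coef L b) = delta a b.
Proof.
  revert a b.
  assert (Hle : forall a b, In a (idx L) -> In b (idx L) -> (fst a <= fst b)%nat ->
                  rkhs_ip theta L (coef L a) (coef L b) = delta a b).
  { intros a b Ha Hb Hab; pose proof Ha as Ha'.
    apply in_idx in Ha'; destruct Ha' as [-> | [-> | [l [k [Hl [Hk ->]]]]]].
    - apply coef01_orthonormal, Hb.
    - apply coef02_orthonormal, Hb.
    - apply coef_level_orthonormal; assumption. }
  intros a b Ha Hb; destruct (Nat.le_ge_cases (fst a) (fst b)); auto.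
  rewrite rkhs_ip_sym, delta_sym; auto.
Qed.

Definition in_span (L : nat) (f : R -> R) : Prop :=
  exists d : nat * nat -> R,
    forall x, 0 <= x <= 1 -> f x = sum_list (idx L) (fun a => d a * psi theta a x).

Lemma in_span_lin L f g al be :
  in_span L f -> in_span L g -> in_span L (fun x => al * f x + be * g x).
Proof.
  intros [d Hd] [d' Hd']; exists (fun a => al * d a + be * d' a); intros x Hx.
  rewrite sum_list_lin, <- Hd, <- Hd'; auto.
Qed.

Lemma in_span_ext L f g :
  (forall x, 0 <= x <= 1 -> f x = g x) -> in_span L g -> in_span L f.
Proof. intros H [d Hd]; exists d; intros x Hx; rewrite H, Hd; auto. Qed.

Lemma in_span_psi L b : In b (idx L) -> in_span L (psi theta b).
Proof.
  intros Hb; exists (fun a => delta a b); intros x _.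
  rewrite sum_list_delta; auto using NoDup_idx.
Qed.

Lemma in_span_S L f : in_span L f -> in_span (S L) f.
Proof.
  intros [d Hd]; exists (fun a => if Nat.leb (fst a) L then d a else 0); intros x Hx.
  rewrite idx_S, sum_list_app, Hd by exact Hx.
  rewrite (sum_list_eq0 (level (S L))), Rplus_0_r.
  - apply sum_list_ext; intros a Ha.
    apply in_idx in Ha; destruct Ha as [-> | [-> | [l [k [Hl [_ ->]]]]]]; cbn [fst]; auto.
    replace (Nat.leb l L) with true by (symmetry; apply Nat.leb_le; lia); reflexivity.
  - intros a Ha; apply in_level in Ha; destruct Ha as [k [_ ->]]; cbn [fst].
    replace (Nat.leb (S L) L) with false by (symmetry; apply Nat.leb_gt; lia); ring.
Qed.

Lemma kernel_0_psi x : 0 <= x <= 1 ->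
  Kexp theta x 0 = norm01 / 2 * psi01 theta x + norm02 / 2 * psi02 theta x.
Proof.
  intros Hx; pose proof norm01_pos; pose proof norm02_pos.
  unfold Kexp, psi01, psi02; fold norm01 norm02; rewrite Rminus_0_r, Rabs_right by lra.
  field; lra.
Qed.

Lemma kernel_1_psi x : 0 <= x <= 1 ->
  Kexp theta x 1 = norm01 / 2 * psi01 theta x + - norm02 / 2 * psi02 theta x.
Proof.
  intros Hx; pose proof norm01_pos; pose proof norm02_pos.
  unfold Kexp, psi01, psi02; fold norm01 norm02; rewrite Rabs_left1 by lra.
  replace (- theta * - (x - 1)) with (- theta * (1 - x)) by ring; field; lra.
Qed.

(* [psi_lm_kernel] solved for its middle kernel. *)
Lemma kernel_peak_psi_lm l m x :
  Kexp theta x (INR m / 2 ^ l) =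
  / (psi_scale l * cosh (theta / 2 ^ l)) * psi_lm theta l m x
  + / (2 * cosh (theta / 2 ^ l)) *
      (Kexp theta x ((INR m - 1) / 2 ^ l) + Kexp theta x ((INR m + 1) / 2 ^ l)).
Proof.
  rewrite psi_lm_kernel; pose proof (psi_scale_pos l).
  pose proof (cosh_pos (theta / 2 ^ l)); field; lra.
Qed.

Lemma node_S_even L i : node (S L) (2 * i) = node L i.
Proof.
  unfold node; rewrite mult_INR; cbn [pow]; change (INR 2) with 2.
  pose proof (pow2_pos L); field; lra.
Qed.

Lemma node_S_odd_neighbours L i :
  (INR (2 * i + 1) - 1) / 2 ^ S L = node L i /\
  (INR (2 * i + 1) + 1) / 2 ^ S L = node L (i + 1).
Proof.
  unfold node; rewrite !plus_INR, mult_INR; cbn [pow]; change (INR 2) with 2;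
    change (INR 1) with 1.
  pose proof (pow2_pos L); split; field; lra.
Qed.

Lemma in_span_kernel L j : (j <= 2 ^ L)%nat -> in_span L (fun x => Kexp theta x (node L j)).
Proof.
  revert j; induction L as [|L IH]; intros j Hj.
  - assert (H01 : in_span 0 (psi theta (0, 1)%nat)) by (apply in_span_psi; simpl; auto).
    assert (H02 : in_span 0 (psi theta (0, 2)%nat)) by (apply in_span_psi; simpl; auto).
    cbn in Hj; destruct j as [|[|j]]; [| |lia].
    + apply (in_span_ext 0 _ (fun x => norm01 / 2 * psi theta (0, 1)%nat x
                                       + norm02 / 2 * psi theta (0, 2)%nat x));
        [|apply in_span_lin; assumption].
      intros x Hx; rewrite node_0; apply kernel_0_psi, Hx.
    + apply (in_span_ext 0 _ (fun x => norm01 / 2 * psi theta (0, 1)%nat x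
                                       + - norm02 / 2 * psi theta (0, 2)%nat x));
        [|apply in_span_lin; assumption].
      intros x Hx; rewrite (node_last 0 : node 0 1 = 1); apply kernel_1_psi, Hx.
  - destruct (Nat.Even_or_Odd j) as [[i ->] | [i ->]].
    + apply in_span_S; apply (in_span_ext _ _ (fun x => Kexp theta x (node L i)));
        [|apply IH; cbn in Hj; lia].
      intros x _; rewrite node_S_even; reflexivity.
    + assert (Hin : In (S L, 2 * i + 1)%nat (idx (S L))).
      { apply in_idx; right; right; exists (S L), i; cbn in Hj |- *.
        rewrite Nat.sub_0_r; repeat split; lia. }
      apply (in_span_ext _ _ (fun x =>
               / (psi_scale (S L) * cosh (theta / 2 ^ S L)) * psi theta (S L, 2 * i + 1)%nat x
               + / (2 * cosh (theta / 2 ^ S L)) *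
                   (1 * Kexp theta x (node L i) + 1 * Kexp theta x (node L (i + 1))))).
      * intros x _; destruct (node_S_odd_neighbours L i) as [El Er].
        unfold node at 1; rewrite kernel_peak_psi_lm, psi_level, El, Er by lia.
        rewrite !Rmult_1_l; reflexivity.
      * apply in_span_lin; [apply in_span_psi, Hin|].
        apply in_span_S, in_span_lin; apply IH; cbn in Hj; lia.
Qed.

End Basis.

Theorem mainTheorem2 (theta : R) (L : nat) :
  0 < theta -> (1 <= L)%nat ->
  NoDup (idx L) /\ length (idx L) = (2 ^ L + 1)%nat /\
  (exists C : nat * nat -> nat -> R,
     (forall a, In a (idx L) ->
        forall x, 0 <= x <= 1 -> psi theta a x = comb theta L (C a) x) /\
     (forall a b, In a (idx L) -> In b (idx L) ->
        rkhs_ip theta L (C a) (C b) = delta a b)) /\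
  (forall j, (j <= 2 ^ L)%nat ->
     exists d : nat * nat -> R,
       forall x, 0 <= x <= 1 ->
         Kexp theta x (node L j) = sum_list (idx L) (fun a => d a * psi theta a x)).
Proof.
  intros Htheta _; split; [apply NoDup_idx|]; split; [apply length_idx|]; split.
  - exists (coef theta L); split.
    + intros a Ha x Hx; apply psi_comb; assumption.
    + intros a b Ha Hb; apply coef_orthonormal; assumption.
  - intros j Hj; apply in_span_kernel; assumption.
Qed.
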